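(* Let $(V,g)$ be a 4-dimensional pseudo-Riemannian manifold whose metric in local coordinates $x=(x^1,x^2,x^3,x^4)$ on an open domain reads \[ ds^2=\Phi(x)\big[\Xi_1(dx^1)^2+\Xi_2(dx^2)^2+\Xi_3(dx^3)^2\big]+2\sum_{i=1}^3\beta_i(x)\,dx^idx^4+\Psi(x)(dx^4)^2, \] where $\Xi_i=\Xi_i(x^1,x^2,x^3)$, and $\Phi,\beta_i,\Psi,\Xi_i$ are $C^2$ functions with $\Phi,\Xi_1,\Xi_2,\Xi_3$ nowhere zero and the metric nondegenerate. Let $P^a{}_b$ be the orthogonal projector onto the tangent spaces of the hypersurfaces $x^4=\mathrm{const}$, whose nonzero components are $P^1{}_1=P^2{}_2=P^3{}_3=1$, $P^i{}_4=\beta_i/(\Phi\,\Xi_i)$ ($i=1,2,3$), and let $\Pi_{ab}=g_{ab}-P_{ab}$ (so $p=3$, $n=4$). Then \[ P^r{}_aP^s{}_bP^q{}_cT_{rsq}=0 . \]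
   Context: Indices are raised and lowered with $g$. For a pair of smooth symmetric tensor fields $P_{ab}$, $\Pi_{ab}$ forming at each point orthogonal complementary projectors ($P_{ab}+\Pi_{ab}=g_{ab}$, $P_{aq}P^q{}_b=P_{ab}$, $\Pi_{aq}\Pi^q{}_b=\Pi_{ab}$, $P_{aq}\Pi^q{}_b=0$) with $p=P^a{}_a$, and $\nabla$ the Levi-Civita connection of $g$, define $M_{abc}=\nabla_bP_{ac}+\nabla_cP_{ab}-\nabla_aP_{bc}$, $E_a=M_{acb}P^{cb}$, $W_a=-M_{acb}\Pi^{cb}$, and $T_{abc}=M_{abc}+\frac{1}{n-p}W_a\Pi_{bc}-\frac1pE_aP_{bc}$. *)

(* Coordinates on an open domain of R^n are row
   vectors 'rV[R]_n; coordinate indices x^1..x^n are the ordinals 0..n-1. *)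
From HB Require Import structures.
From mathcomp Require Import all_boot all_order all_algebra.
From mathcomp Require Import all_classical all_reals all_analysis.
Set Implicit Arguments. Unset Strict Implicit. Unset Printing Implicit Defensive.
Import Order.TTheory GRing.Theory Num.Theory.
Import numFieldNormedType.Exports.
Local Open Scope classical_set_scope.
Local Open Scope ring_scope.

Section TensorCalculus.
Variables (R : realType) (n : nat).
Local Notation pt := 'rV[R]_n.

Definition ebasis (i : 'I_n) : pt := delta_mx 0 i.
Definition partial (i : 'I_n) (f : pt -> R) (x : pt) : R := 'D_(ebasis i) f x.

Definition C1_on (U : set pt) (f : pt -> R) : Prop :=
  (forall x, U x -> {for x, continuous f}) /\
  (forall i x, U x -> derivable f x (ebasis i) /\ {for x, continuous (partial i f)}).
Definition C2_on (U : set pt) (f : pt -> R) : Prop :=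
  C1_on U f /\ forall i, C1_on U (partial i f).

(* A metric g_ab is a matrix-valued field G; Pu x a b = P^a_b (mixed). *)
Variables (G : pt -> 'M[R]_n) (Pu : pt -> 'M[R]_n).

Definition ginv (x : pt) : 'M[R]_n := invmx (G x).

Definition Chr (x : pt) (c a b : 'I_n) : R :=
  2^-1 * \sum_(d < n) ginv x c d *
    (partial a (fun y => G y d b) x + partial b (fun y => G y d a) x
     - partial d (fun y => G y a b) x).

Definition Pdn (x : pt) (a b : 'I_n) : R := \sum_(q < n) G x a q * Pu x q b.
Definition Pidn (x : pt) (a b : 'I_n) : R := G x a b - Pdn x a b.
Definition Pupup (x : pt) (a b : 'I_n) : R :=
  \sum_(c < n) \sum_(d < n) ginv x a c * ginv x b d * Pdn x c d.
Definition Piupup (x : pt) (a b : 'I_n) : R :=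
  \sum_(c < n) \sum_(d < n) ginv x a c * ginv x b d * Pidn x c d.
Definition ptrace (x : pt) : R := \sum_(a < n) Pu x a a.

(* nablaP x b a c = nabla_b P_ac *)
Definition nablaP (x : pt) (b a c : 'I_n) : R :=
  partial b (fun y => Pdn y a c) x
  - \sum_(d < n) (Chr x d b a * Pdn x d c + Chr x d b c * Pdn x a d).

Definition Mt (x : pt) (a b c : 'I_n) : R :=
  nablaP x b a c + nablaP x c a b - nablaP x a b c.
Definition Et (x : pt) (a : 'I_n) : R :=
  \sum_(c < n) \sum_(b < n) Mt x a c b * Pupup x c b.
Definition Wt (x : pt) (a : 'I_n) : R :=
  - \sum_(c < n) \sum_(b < n) Mt x a c b * Piupup x c b.
Definition Tt (x : pt) (a b c : 'I_n) : R :=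
  Mt x a b c + (n%:R - ptrace x)^-1 * Wt x a * Pidn x b c
  - (ptrace x)^-1 * Et x a * Pdn x b c.

End TensorCalculus.

Section Metric4.
Variable R : realType.
Local Notation pt := 'rV[R]_4.
Variables (Phi Psi : pt -> R) (beta Xi : 'I_3 -> pt -> R).

(* indices 0,1,2 <-> x^1,x^2,x^3 ; ord_max = 3 <-> x^4 *)
Definition gmetric (x : pt) : 'M[R]_4 := \matrix_(a, b)
  match unlift ord_max a, unlift ord_max b with
  | Some i, Some j => if i == j then Phi x * Xi i x else 0
  | Some i, None => beta i x
  | None, Some j => beta j x
  | None, None => Psi x
  end.

Definition Pmixed (x : pt) : 'M[R]_4 := \matrix_(a, b)
  match unlift ord_max a, unlift ord_max b with
  | Some i, Some j => if i == j then 1 else 0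
  | Some i, None => beta i x / (Phi x * Xi i x)
  | None, _ => 0
  end.
End Metric4.

From HB Require Import structures.
From mathcomp Require Import all_boot all_order all_algebra.
From mathcomp Require Import all_classical all_reals all_analysis.
From mathcomp Require Import ring.
Set Implicit Arguments. Unset Strict Implicit. Unset Printing Implicit Defensive.
Import Order.TTheory GRing.Theory Num.Theory.
Import numFieldNormedType.Exports.
Local Open Scope classical_set_scope.
Local Open Scope ring_scope.

(* For the hypersurfaces x^4 = const the projector satisfies P^4_a = 0 and
   P^q_j = delta^q_j for spatial j, so P_ab = g_ab as soon as one index is
   spatial.  For spatial r, q the covariant derivative nabla_b P_rq therefore
   reduces to nabla_b g_rq, which vanishes by metric compatibility; hence M
   vanishes on spatial indices.  E_r vanishes as well since P^{4b} = 0, and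
   Pi_sq = 0 for spatial s, q.  As P^r_a = 0 for r = 4, only the spatial
   components of T enter the projection, and they are all zero. *)

Section LeviCivita.
Variables (R : realType) (n : nat) (G : 'rV[R]_n -> 'M[R]_n).
Hypothesis G_sym : forall y a b, G y a b = G y b a.

Lemma partial_metricC i a b x :
  partial i (fun y => G y a b) x = partial i (fun y => G y b a) x.
Proof. by congr (partial i _ x); apply: funext => y; rewrite G_sym. Qed.

Lemma metric_ginv_contract x (F : 'I_n -> R) q : G x \in unitmx ->
  \sum_(d < n) G x q d * \sum_(e < n) ginv G x d e * F e = F q.
Proof.
move=> Gx_unit.
have := congr1 (fun v : 'cV_n => v q 0) (mulKVmx Gx_unit (\col_e F e)).
rewrite !mxE => <-; apply: eq_bigr => d _; rewrite mxE; congr (_ * _).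
by apply: eq_bigr => e _; rewrite mxE.
Qed.

Lemma Chr_lower x b r q : G x \in unitmx ->
  \sum_(d < n) Chr G x d b r * G x d q =
  2^-1 * (partial b (fun y => G y q r) x + partial r (fun y => G y q b) x
          - partial q (fun y => G y b r) x).
Proof.
move=> Gx_unit; rewrite -[in RHS](metric_ginv_contract (fun e =>
  partial b (fun y => G y e r) x + partial r (fun y => G y e b) x
  - partial e (fun y => G y b r) x) q Gx_unit) mulr_sumr.
by apply: eq_bigr => d _; rewrite /Chr G_sym -mulrA [_ * G x q d]mulrC.
Qed.

Lemma metric_compatible x b r q : G x \in unitmx ->
  partial b (fun y => G y r q) x =
  \sum_(d < n) (Chr G x d b r * G x d q + Chr G x d b q * G x r d).
Proof.
move=> Gx_unit; rewrite big_split /=.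
rewrite [X in _ + X](eq_bigr (fun d => Chr G x d b q * G x d r)); last first.
  by move=> d _; rewrite G_sym.
rewrite !Chr_lower // (partial_metricC r q b) (partial_metricC b q r).
rewrite (partial_metricC b r q) (partial_metricC q r b).
rewrite -mulrDr; set A := partial b _ x; set B := partial r _ x; set C := partial q _ x.
have -> : A + B - C + (A + C - B) = 2 * A by ring.
by rewrite mulrA mulVf ?pnatr_eq0 ?mul1r.
Qed.

End LeviCivita.

Section AdaptedProjector.
Variables (R : realType) (n : nat) (G P : 'rV[R]_n.+1 -> 'M[R]_n.+1).
Hypothesis G_sym : forall y a b, G y a b = G y b a.
Hypothesis P_spatial_col : forall y a b, b != ord_max -> P y a b = (a == b)%:R.

Lemma Pdn_spatial_col y a b : b != ord_max -> Pdn G P y a b = G y a b.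
Proof.
move=> b_spatial; rewrite /Pdn (bigD1 b) //= P_spatial_col // eqxx mulr1.
rewrite big1 ?addr0 // => d /negbTE d_neq_b.
by rewrite P_spatial_col // d_neq_b mulr0.
Qed.

Variable x : 'rV[R]_n.+1.
Hypothesis G_unit : G x \in unitmx.
Hypothesis P_last_row : forall c, P x ord_max c = 0.
Hypothesis Pdn_sym : forall a b, Pdn G P x a b = Pdn G P x b a.

Lemma Pdn_spatial_row a b : a != ord_max -> Pdn G P x a b = G x a b.
Proof. by move=> a_spatial; rewrite Pdn_sym Pdn_spatial_col // G_sym. Qed.

Lemma nablaP_spatial b r q : r != ord_max -> q != ord_max ->
  nablaP G P x b r q = 0.
Proof.
move=> r_spatial q_spatial; rewrite /nablaP.
have -> : (fun y => Pdn G P y r q) = (fun y => G y r q).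
  by apply: funext => y; rewrite Pdn_spatial_col.
under eq_bigr do rewrite Pdn_spatial_col // Pdn_spatial_row //.
by rewrite -metric_compatible ?subrr.
Qed.

Lemma Mt_spatial r s q : r != ord_max -> s != ord_max -> q != ord_max ->
  Mt G P x r s q = 0.
Proof. by move=> *; rewrite /Mt !nablaP_spatial // addr0 subr0. Qed.

Lemma ginv_Pdn a d : \sum_(c < n.+1) ginv G x a c * Pdn G P x c d = P x a d.
Proof.
have := congr1 (fun M : 'M[R]_n.+1 => M a d) (mulKmx G_unit (P x)).
rewrite mxE => <-; apply: eq_bigr => c _.
by rewrite /Pdn mxE.
Qed.

Lemma Pupup_last b : Pupup G P x ord_max b = 0.
Proof.
rewrite /Pupup exchange_big big1 //= => d _.
under eq_bigr do rewrite mulrAC.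
by rewrite -mulr_suml ginv_Pdn P_last_row mul0r.
Qed.

Lemma Pupup_sym a b : Pupup G P x a b = Pupup G P x b a.
Proof.
rewrite /Pupup exchange_big /=; apply: eq_bigr => c _; apply: eq_bigr => d _.
by rewrite [ginv G x b c * _]mulrC Pdn_sym.
Qed.

Lemma Et_spatial r : r != ord_max -> Et G P x r = 0.
Proof.
move=> r_spatial; rewrite /Et big1 // => c _; rewrite big1 // => b _.
have [->|c_spatial] := eqVneq c ord_max; first by rewrite Pupup_last mulr0.
have [->|b_spatial] := eqVneq b ord_max.
  by rewrite Pupup_sym Pupup_last mulr0.
by rewrite Mt_spatial // mul0r.
Qed.

Lemma Tt_spatial r s q : r != ord_max -> s != ord_max -> q != ord_max ->
  Tt G P x r s q = 0.
Proof.
move=> r_spatial s_spatial q_spatial.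
rewrite /Tt Mt_spatial // Et_spatial // /Pidn Pdn_spatial_col //; ring.
Qed.

Lemma projected_Tt_eq0 a b c :
  \sum_(r < n.+1) \sum_(s < n.+1) \sum_(q < n.+1)
    P x r a * P x s b * P x q c * Tt G P x r s q = 0.
Proof.
apply: big1 => r _; apply: big1 => s _; apply: big1 => q _.
have [->|r_spatial] := eqVneq r ord_max; first by rewrite P_last_row !mul0r.
have [->|s_spatial] := eqVneq s ord_max; first by rewrite P_last_row mulr0 !mul0r.
have [->|q_spatial] := eqVneq q ord_max; first by rewrite P_last_row mulr0 mul0r.
by rewrite Tt_spatial // mulr0.
Qed.

End AdaptedProjector.

Section Metric4.
Variables (R : realType) (Phi Psi : 'rV[R]_4 -> R) (beta Xi : 'I_3 -> 'rV[R]_4 -> R).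
Local Notation G := (gmetric Phi Psi beta Xi).
Local Notation P := (Pmixed Phi beta Xi).

Lemma gmetric_sym y a b : G y a b = G y b a.
Proof.
rewrite !mxE; case: (unlift ord_max a) => [i|]; case: (unlift ord_max b) => [j|] //.
by rewrite eq_sym; case: eqP => // ->.
Qed.

Lemma Pmixed_last_row y c : P y ord_max c = 0.
Proof. by rewrite mxE unlift_none. Qed.

Lemma Pmixed_spatial_col y a b : b != ord_max -> P y a b = (a == b)%:R.
Proof.
case: (unliftP ord_max b) => [j ->|->] b_spatial; last by rewrite eqxx in b_spatial.
case: (unliftP ord_max a) => [i ->|->].
  by rewrite mxE !liftK (inj_eq lift_inj); case: eqP.
by rewrite Pmixed_last_row (negbTE (neq_lift _ _)).
Qed.

Lemma Pdn_Pmixed_last_col y i : Phi y * Xi i y != 0 ->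
  Pdn G P y (lift ord_max i) ord_max = G y (lift ord_max i) ord_max.
Proof.
move=> PhiXi_neq0; rewrite /Pdn (bigD1 (lift ord_max i)) //= big1 ?addr0.
  by rewrite !mxE !liftK unlift_none eqxx mulrC divfK.
move=> d; case: (unliftP ord_max d) => [k ->|->] d_neq.
  rewrite !mxE !liftK; case: eqVneq => [eik|_]; last by rewrite mul0r.
  by rewrite eik eqxx in d_neq.
by rewrite Pmixed_last_row mulr0.
Qed.

Lemma Pdn_Pmixed_sym y : (forall i, Phi y * Xi i y != 0) ->
  forall a b, Pdn G P y a b = Pdn G P y b a.
Proof.
move=> PhiXi_neq0.
have Pdn_col := @Pdn_spatial_col _ _ G P Pmixed_spatial_col y.
have Pdn_row a b : a != ord_max -> Pdn G P y a b = G y a b.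
  case: (unliftP ord_max a) => [i ->|->] a_spatial; last by rewrite eqxx in a_spatial.
  have [->|b_spatial] := eqVneq b ord_max; first exact: Pdn_Pmixed_last_col.
  exact: Pdn_col.
move=> a b; have [->|a_spatial] := eqVneq a ord_max.
  have [->//|b_spatial] := eqVneq b ord_max.
  by rewrite Pdn_col // Pdn_row // gmetric_sym.
by rewrite Pdn_row // Pdn_col // gmetric_sym.
Qed.

End Metric4.

Theorem mainTheorem13 (R : realType) (U : set 'rV[R]_4)
  (Phi Psi : 'rV[R]_4 -> R) (beta Xi : 'I_3 -> 'rV[R]_4 -> R) :
  open U ->
  C2_on U Phi -> C2_on U Psi ->
  (forall i, C2_on U (beta i)) -> (forall i, C2_on U (Xi i)) ->
  (forall x, U x -> Phi x != 0) ->
  (forall i x, U x -> Xi i x != 0) ->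
  (* Xi_i depends only on (x^1, x^2, x^3) *)
  (forall i x y, U x -> U y -> (forall j : 'I_4, j != ord_max -> x 0 j = y 0 j) ->
     Xi i x = Xi i y) ->
  (* nondegenerate metric *)
  (forall x, U x -> \det (gmetric Phi Psi beta Xi x) != 0) ->
  forall x, U x -> forall a b c : 'I_4,
    \sum_(r < 4) \sum_(s < 4) \sum_(q < 4)
      Pmixed Phi beta Xi x r a * Pmixed Phi beta Xi x s b * Pmixed Phi beta Xi x q c *
      Tt (gmetric Phi Psi beta Xi) (Pmixed Phi beta Xi) x r s q = 0.
Proof.
move=> _ _ _ _ _ Phi_neq0 Xi_neq0 _ det_neq0 x Ux a b c.
have PhiXi_neq0 i : Phi x * Xi i x != 0 by rewrite mulf_neq0 ?Phi_neq0 ?Xi_neq0.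
apply: projected_Tt_eq0.
- exact: gmetric_sym.
- exact: Pmixed_spatial_col.
- by rewrite unitmxE unitfE det_neq0.
- exact: Pmixed_last_row.
- exact: Pdn_Pmixed_sym.
Qed.
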